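(* (i) If $r+s=0$, then $a^*_i=\frac{d-r}{2}$ for $0\le i\le d-1$ and $a^*_d=\frac{d(r+1)}{2}$. (ii) If $r-s=0$, then $a^*_i=\frac d2$ for $0\le i\le d$.
   Context: Fix an integer $d\ge0$ and $r,s\in(-1,\infty)$. Write $(x)_i=x(x+1)\cdots(x+i-1)$, $(x)_0=1$. For $0\le i\le d$ put $\theta^*_i=i$. Put $b^*_i=\frac{(d-i)(i-d-s)(2d-2i+r+s+2)_i}{(2d-2i+r+s)_{i+1}}$ ($0\le i\le d-1$), $c^*_i=\frac{i(i-d-r-1)(d-i+r+s+1)_{d-i}}{(d-i+r+s+2)_{d-i+1}}$ ($1\le i\le d$), $b^*_d=c^*_0=0$, and $a^*_i=\theta^*_0-b^*_i-c^*_i$ for $0\le i\le d$. *)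

From HB Require Import structures.
From mathcomp Require Import all_boot all_order all_algebra.
Set Implicit Arguments. Unset Strict Implicit. Unset Printing Implicit Defensive.
Import Order.TTheory GRing.Theory Num.Theory.
Local Open Scope ring_scope.

Definition poch (R : pzRingType) (x : R) (i : nat) : R :=
  \prod_(k < i) (x + k%:R).

Definition thetastar (R : pzRingType) (i : nat) : R := i%:R.

Definition bstar (R : fieldType) (d : nat) (r s : R) (i : nat) : R :=
  if (i < d)%N then
    ((d%:R - i%:R) * (i%:R - d%:R - s)
       * poch (2 * d%:R - 2 * i%:R + r + s + 2) i)
    / poch (2 * d%:R - 2 * i%:R + r + s) i.+1
  else 0.

Definition cstar (R : fieldType) (d : nat) (r s : R) (i : nat) : R :=
  if (0 < i <= d)%N then
    (i%:R * (i%:R - d%:R - r - 1)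
       * poch (d%:R - i%:R + r + s + 1) (d - i))
    / poch (d%:R - i%:R + r + s + 2) (d - i).+1
  else 0.

Definition astar (R : fieldType) (d : nat) (r s : R) (i : nat) : R :=
  thetastar R 0 - bstar d r s i - cstar d r s i.

From HB Require Import structures.
From mathcomp Require Import all_boot all_order all_algebra.
From mathcomp Require Import ring lra.
Import Order.TTheory GRing.Theory Num.Theory.
Local Open Scope ring_scope.

(* For i < d the Pochhammer quotients in b*_i and c*_i telescope to rational
   functions of low degree: with x = 2(d-i) + r + s,
     b*_i = (d-i)(i-d-s)(x+i+1) / (x(x+1)),
     c*_i = i(i-d-r-1)(d-i+r+s+1) / ((x+1)(x+2)),
   while a*_d = d(r+1)/(r+s+2).  When r + s = 0 or r = s, the denominators of
   a*_i = -b*_i - c*_i cancel and a*_i no longer depends on i. *)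

Lemma poch_recl (R : pzRingType) (x : R) n : poch x n.+1 = x * poch (x + 1) n.
Proof.
rewrite /poch big_ord_recl addr0; congr (_ * _).
by apply: eq_bigr => k _; rewrite /bump /= -nat1r addrA.
Qed.

Lemma poch_recr (R : pzRingType) (x : R) n : poch x n.+1 = poch x n * (x + n%:R).
Proof. by rewrite /poch big_ord_recr. Qed.

Lemma poch_gt0 (R : numDomainType) (x : R) n : 0 < x -> 0 < poch x n.
Proof. by move=> x_gt0; apply: prodr_gt0 => k _; apply: ltr_wpDr. Qed.

Lemma poch_ratio_shift2 (F : fieldType) (x : F) i :
  poch x i.+1 != 0 -> x * (x + 1) != 0 ->
  poch (x + 2) i / poch x i.+1 = (x + i.+1%:R) / (x * (x + 1)).
Proof.
move=> poch_neq0 x_neq0; apply/eqP; rewrite eqr_div //; apply/eqP.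
rewrite mulrC [RHS]mulrC -poch_recr poch_recl poch_recl.
by rewrite mulrA -addrA.
Qed.

Lemma poch_ratio_shift1 (F : fieldType) (y : F) m :
  poch (y + 1) m.+1 != 0 -> (y + m%:R) * (y + m.+1%:R) != 0 ->
  poch y m / poch (y + 1) m.+1 = y / ((y + m%:R) * (y + m.+1%:R)).
Proof.
move=> poch_neq0 den_neq0; apply/eqP; rewrite eqr_div //; apply/eqP.
rewrite mulrA -poch_recr poch_recl poch_recr -mulrA; congr (_ * (_ * _)).
by rewrite -nat1r addrA.
Qed.

Lemma natrB_ge1 (R : numDomainType) {i d : nat} : (i < d)%N -> 1 <= d%:R - i%:R :> R.
Proof. by move=> lt_id; rewrite lerBrDl natr1 ler_nat. Qed.

Section DualIntersectionNumbers.
Variables (R : realFieldType) (d : nat) (r s : R).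

Lemma bstar_lt i : -2 < r + s -> (i < d)%N ->
  bstar d r s i =
  (d%:R - i%:R) * (i%:R - d%:R - s) * (2 * d%:R - 2 * i%:R + r + s + i.+1%:R)
  / ((2 * d%:R - 2 * i%:R + r + s) * (2 * d%:R - 2 * i%:R + r + s + 1)).
Proof.
move=> rs_gt lt_id; rewrite /bstar lt_id.
have x_gt0 : 0 < 2 * d%:R - 2 * i%:R + r + s.
  by have ge1 := natrB_ge1 R lt_id; lra.
set x := 2 * d%:R - 2 * i%:R + r + s in x_gt0 *.
rewrite -mulrA poch_ratio_shift2 ?mulrA // ?gt_eqF ?poch_gt0 ?mulr_gt0 //.
by rewrite ltr_wpDr.
Qed.

Lemma cstar_lt i : -2 < r + s -> (i < d)%N ->
  cstar d r s i =
  i%:R * (i%:R - d%:R - r - 1) * (d%:R - i%:R + r + s + 1)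
  / ((2 * d%:R - 2 * i%:R + r + s + 1) * (2 * d%:R - 2 * i%:R + r + s + 2)).
Proof.
case: i => [|i] rs_gt lt_id; first by rewrite /cstar !mul0r.
rewrite /cstar /= (ltnW lt_id).
have m_eq : (d - i.+1)%:R = d%:R - i.+1%:R :> R by rewrite natrB // ltnW.
have -> : d%:R - i.+1%:R + r + s + 2 = d%:R - i.+1%:R + r + s + 1 + 1 :> R.
  by ring.
have y_gt0 : 0 < d%:R - i.+1%:R + r + s + 1.
  by have ge1 := natrB_ge1 R lt_id; lra.
set y := d%:R - i.+1%:R + r + s + 1 in y_gt0 *.
have y_pos k : 0 < y + k%:R by rewrite ltr_wpDr.
rewrite -mulrA poch_ratio_shift1; first last.
- by rewrite gt_eqF ?mulr_gt0.
- by rewrite gt_eqF // poch_gt0 // (y_pos 1).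
rewrite mulrA; congr (_ / _).
by rewrite -natr1 m_eq /y; ring.
Qed.

Lemma astar_last : -2 < r + s -> astar d r s d = d%:R * (r + 1) / (r + s + 2).
Proof.
move=> rs_gt; rewrite /astar /bstar /cstar ltnn leqnn andbT subnn /thetastar.
rewrite /poch big_ord0 big_ord1 /= !subrr !add0r addr0 mulr1.
case: d => [|n] /=; first by rewrite oppr0 !mul0r.
by field; rewrite gt_eqF //; lra.
Qed.

Lemma astar_lt i : -2 < r + s -> (i < d)%N ->
  astar d r s i =
  - ((d%:R - i%:R) * (i%:R - d%:R - s) * (2 * d%:R - 2 * i%:R + r + s + i.+1%:R)
     / ((2 * d%:R - 2 * i%:R + r + s) * (2 * d%:R - 2 * i%:R + r + s + 1)))
  - i%:R * (i%:R - d%:R - r - 1) * (d%:R - i%:R + r + s + 1)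
     / ((2 * d%:R - 2 * i%:R + r + s + 1) * (2 * d%:R - 2 * i%:R + r + s + 2)).
Proof. by move=> rs_gt lt_id; rewrite /astar bstar_lt ?cstar_lt // sub0r. Qed.

End DualIntersectionNumbers.

Theorem lemma2p7 (R : realFieldType) (d : nat) (r s : R) :
  -1 < r -> -1 < s ->
  (r + s = 0 ->
     (forall i : nat, (i < d)%N -> astar d r s i = (d%:R - r) / 2) /\
     astar d r s d = d%:R * (r + 1) / 2) /\
  (r - s = 0 ->
     forall i : nat, (i <= d)%N -> astar d r s i = d%:R / 2).
Proof.
move=> r_gt s_gt; have rs_gt : -2 < r + s by lra.
split=> [rs0 | rs_eq].
- have s_eq : s = - r by lra.
  split=> [i lt_id|]; last by rewrite astar_last // rs0 add0r.
  have ge1 := natrB_ge1 R lt_id.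
  by rewrite astar_lt // s_eq -natr1; field; rewrite !gt_eqF //; lra.
- have s_eq : s = r by lra.
  move=> i; rewrite leq_eqVlt => /predU1P [-> | lt_id].
  + by rewrite astar_last // s_eq; field; rewrite gt_eqF //; lra.
  + have ge1 := natrB_ge1 R lt_id.
    by rewrite astar_lt // s_eq -natr1; field; rewrite !gt_eqF //; lra.
Qed.
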